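(* For $i=1,2$ let $C_i=C_{i+}\oplus C_{i-}$ with $C_{i\pm}=\mathbb{Z}_D^n$, let $P_i=\begin{bmatrix}I_n&0\\0&-I_n\end{bmatrix}$, and let $\delta_i$ be boundary operators on $C_i$ compatible with $P_i$. Let $C=C_1\otimes C_2$, $\partial=\delta_1\otimes I+P_1\otimes\delta_2$, and $C_+=C_{1+}\otimes C_{2+}\oplus C_{1-}\otimes C_{2-}\le C$. Fix $n'\le n$ and suppose that the distance of each of the codes $\mathrm{CSS}(C_i,\delta_i,P_i)$ and $\mathrm{CSS}(C_i,\delta_i,-P_i)$ is at least $2(n-n')+1$ ($i=1,2$). If $h\in C_+\cap\ker\partial$ has vanishing reduced matrix, then $h\in\operatorname{im}\partial$. Likewise, if $h\in C_+\cap\ker\partial^T$ has vanishing reduced matrix, then $h\in\operatorname{im}\partial^T$.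
   Context: $D$ is an odd prime, $\mathbb{Z}_D$ the field with $D$ elements; transposes are with respect to the standard (product) bases. A boundary operator compatible with $P$ on $C_+\oplus C_-$ is a linear map $\delta$ with $\delta^2=0$, $\delta P+P\delta=0$, i.e. $\delta=\begin{bmatrix}0&\delta_{+-}\\ \delta_{-+}&0\end{bmatrix}$ with $\delta_{+-}:C_-\to C_+$, $\delta_{-+}:C_+\to C_-$. The code $\mathrm{CSS}(C,\delta,P)$ is the qudit CSS code over $\mathbb{Z}_D$ whose physical qudits correspond to the standard basis vectors of $C_+$, whose $Z$-type stabilizer generators are the columns of $\delta_{+-}$ and whose $X$-type stabilizer generators are the rows of $\delta_{-+}$; its distance is the minimum weight (number of nonzero coordinates) of a vector in $(\ker\delta_{-+}\setminus\operatorname{im}\delta_{+-})\cup(\ker\delta_{+-}^T\setminus\operatorname{im}\delta_{-+}^T)$. $\mathrm{CSS}(C,\delta,-P)$ is the same construction with the roles of $C_+$ and $C_-$ (and of $\delta_{+-}$, $\delta_{-+}$) exchanged. An element $\psi\in C_+$ is viewed as a pair of $n\times n$ matrices $\psi_+\in C_{1+}\otimes C_{2+}$, $\psi_-\in C_{1-}\otimes C_{2-}$; its reduced matrix is the pair of $n'\times n'$ submatrices of $\psi_+$ and $\psi_-$ formed by their first $n'$ rows and first $n'$ columns. *)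

From HB Require Import structures.
From mathcomp Require Import all_boot all_order all_algebra.
Set Implicit Arguments. Unset Strict Implicit. Unset Printing Implicit Defensive.
Import GRing.Theory.
Local Open Scope ring_scope.

(* Vectors of C_i = C_{i+} (+) C_{i-} are indexed by 'I_(n + n):
   the first n coordinates (lshift) form C_{i+}, the last n (rshift) C_{i-}. *)

Definition Pmx (R : pzRingType) (n : nat) : 'M[R]_(n + n) :=
  block_mx 1%:M 0 0 (- 1%:M).

Definition compatible_boundary (R : pzRingType) (n : nat) (d : 'M[R]_(n + n)) :=
  d *m d = 0 /\ d *m Pmx R n + Pmx R n *m d = 0.

(* delta_{+-} : C_- -> C_+  and  delta_{-+} : C_+ -> C_- (acting on column vectors) *)
Definition dpm (R : pzRingType) (n : nat) (d : 'M[R]_(n + n)) : 'M[R]_n := ursubmx d.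
Definition dmp (R : pzRingType) (n : nat) (d : 'M[R]_(n + n)) : 'M[R]_n := dlsubmx d.

Definition wt (R : pzRingType) (n : nat) (v : 'cV[R]_n) : nat :=
  #|[set i : 'I_n | v i 0 != 0]|.

Definition in_im (R : pzRingType) (m n : nat) (A : 'M[R]_(m, n)) (v : 'cV[R]_m) : Prop :=
  exists w : 'cV[R]_n, v = A *m w.

(* The CSS code with Z-stabilizer generators the columns of Apm = delta_{+-}
   and X-stabilizer generators the rows of Amp = delta_{-+} has distance
   at least dd: every vector of (ker Amp \ im Apm) u (ker Apm^T \ im Amp^T)
   has weight >= dd. *)
Definition css_dist_ge (R : pzRingType) (n : nat) (Apm Amp : 'M[R]_n) (dd : nat) : Prop :=
  forall v : 'cV[R]_n,
    ((Amp *m v = 0 /\ ~ in_im Apm v) \/ (Apm^T *m v = 0 /\ ~ in_im Amp^T v)) ->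
    (dd <= wt v)%N.

Definition CSS_P_dist_ge (R : pzRingType) (n : nat) (d : 'M[R]_(n + n)) (dd : nat) :=
  css_dist_ge (dpm d) (dmp d) dd.
(* distance of CSS(C, delta, -P) >= dd : roles of C_+ and C_- exchanged *)
Definition CSS_mP_dist_ge (R : pzRingType) (n : nat) (d : 'M[R]_(n + n)) (dd : nat) :=
  css_dist_ge (dmp d) (dpm d) dd.

(* Elements of C = C_1 (x) C_2 are represented by their coefficient arrays
   X : 'M_(n1, n2) in the product basis: X i j = coefficient of e_i (x) f_j.
   The operator A (x) B acts on such arrays as X |-> A X B^T. *)
Definition tens_app (R : pzRingType) (m1 n1 m2 n2 : nat)
  (A : 'M[R]_(m1, n1)) (B : 'M[R]_(m2, n2)) (X : 'M[R]_(n1, n2)) : 'M[R]_(m1, m2) :=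
  A *m X *m B^T.

Definition bdry (R : pzRingType) (n : nat) (d1 d2 : 'M[R]_(n + n))
  (X : 'M[R]_(n + n, n + n)) : 'M[R]_(n + n, n + n) :=
  tens_app d1 1%:M X + tens_app (Pmx R n) d2 X.

Definition bdryT (R : pzRingType) (n : nat) (d1 d2 : 'M[R]_(n + n))
  (X : 'M[R]_(n + n, n + n)) : 'M[R]_(n + n, n + n) :=
  tens_app d1^T (1%:M)^T X + tens_app (Pmx R n)^T d2^T X.

(* C_+ = C_{1+}(x)C_{2+} (+) C_{1-}(x)C_{2-} : the off-diagonal blocks vanish *)
Definition in_Cplus (R : pzRingType) (n : nat) (X : 'M[R]_(n + n, n + n)) : Prop :=
  ursubmx X = 0 /\ dlsubmx X = 0.

Definition psi_p (R : pzRingType) (n : nat) (X : 'M[R]_(n + n, n + n)) : 'M[R]_n := ulsubmx X.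
Definition psi_m (R : pzRingType) (n : nat) (X : 'M[R]_(n + n, n + n)) : 'M[R]_n := drsubmx X.

Definition reduced_zero (R : pzRingType) (n n' : nat) (X : 'M[R]_(n + n, n + n)) : Prop :=
  forall i j : 'I_n, (i < n')%N -> (j < n')%N -> psi_p X i j = 0 /\ psi_m X i j = 0.

From HB Require Import structures.
From mathcomp Require Import all_boot all_order all_algebra.
From Stdlib Require Import Classical.
Set Implicit Arguments. Unset Strict Implicit. Unset Printing Implicit Defensive.
Import GRing.Theory.
Local Open Scope ring_scope.

(* Elements of C are matrices [h], and the boundary is [h |-> d h + P h e] with
   [d = delta1] and [e = delta2^T] (or [d = delta1^T], [e = delta2] for the
   transpose).  The distance bound makes every [delta_i]-cycle supported off the
   reduced coordinates a boundary; dually, every cocycle is cohomologous to one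
   supported on them.  As the reduced matrix of [h] vanishes, pairing such
   cleaned cocycles with [h] shows that the [e]-harmonic part [h pi] of [h] lies in
   the image of [d].  The rest of [h] is a boundary through the homotopy
   [g |-> P g s], where [s] is a generalized inverse of [e]. *)

Section Spans.
Variable F : fieldType.

Lemma row_span_of_ker m n p (M : 'M[F]_(m, n)) (K : 'M[F]_(p, n)) :
  (forall y : 'cV_n, M *m y = 0 -> K *m y = 0) -> exists L, K = L *m M.
Proof.
move=> MK; suff /submxP[L ->] : (K <= M)%MS by exists L.
rewrite submxE; apply/eqP/matrixP => i j.
have /MK : M *m col j (cokermx M) = 0 by rewrite colE mulmxA mulmx_coker mul0mx.
by rewrite colE mulmxA -colE => /matrixP/(_ i 0); rewrite !mxE.
Qed.

Lemma col_span_of_coker m n p (M : 'M[F]_(m, n)) (K : 'M[F]_(m, p)) :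
  (forall z : 'rV_m, z *m M = 0 -> z *m K = 0) -> exists L, K = M *m L.
Proof.
move=> MK; have [L KL] : exists L, K^T = L *m M^T.
  apply: row_span_of_ker => y /(congr1 trmx); rewrite trmx_mul trmxK trmx0.
  by move/MK/(congr1 trmx); rewrite trmx_mul trmxK trmx0.
by exists L^T; rewrite -[K]trmxK KL trmx_mul trmxK.
Qed.

End Spans.

Definition exact_outside (F : fieldType) N (G d : 'M[F]_N) :=
  forall y : 'cV[F]_N, d *m y = 0 -> G *m y = 0 -> exists c, y = d *m c.

Lemma cocycle_cleaning (F : fieldType) N (G d : 'M[F]_N) :
  G *m G = G -> exact_outside G d ->
  forall q (V : 'M[F]_(q, N)), V *m d = 0 -> exists W, (V - W *m d) *m (1%:M - G) = 0.
Proof.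
move=> GG exact_d q V Vd.
have [W VW] : exists W, V *m (1%:M - G) = W *m (d *m (1%:M - G)).
  apply: row_span_of_ker => y dy; rewrite -mulmxA.
  have [c ->] : exists c, (1%:M - G) *m y = d *m c.
    apply: exact_d; first by rewrite mulmxA.
    by rewrite mulmxA mulmxBr mulmx1 GG subrr mul0mx.
  by rewrite mulmxA Vd mul0mx.
by exists W; rewrite mulmxBl VW mulmxA subrr.
Qed.

Lemma cycle_cleaning (F : fieldType) N (G e : 'M[F]_N) :
  G *m G = G -> exact_outside G^T e^T ->
  forall q (V : 'M[F]_(N, q)), e *m V = 0 -> exists W, (1%:M - G) *m (V - e *m W) = 0.
Proof.
move=> GG exact_e q V eV.
have GGT : G^T *m G^T = G^T by rewrite -trmx_mul GG.
have [|W VW] := cocycle_cleaning GGT exact_e (V := V^T).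
  by rewrite -trmx_mul eV trmx0.
exists W^T; apply: trmx_inj.
by rewrite trmx0 -VW trmx_mul !linearB /= trmx1 trmx_mul trmxK.
Qed.

Section TensorComplex.
Variables (F : fieldType) (m k : nat) (d P : 'M[F]_m) (e : 'M[F]_k).
Hypotheses (dd0 : d *m d = 0) (ee0 : e *m e = 0).
Hypotheses (PP1 : P *m P = 1%:M) (dP : d *m P + P *m d = 0).

Definition tensor_bdry (g : 'M[F]_(m, k)) := d *m g + P *m g *m e.

Let Pd : P *m d = - (d *m P).
Proof. by apply/eqP; rewrite -addr_eq0 addrC dP. Qed.

Lemma tensor_bdryD g1 g2 : tensor_bdry (g1 + g2) = tensor_bdry g1 + tensor_bdry g2.
Proof. by rewrite /tensor_bdry mulmxDr mulmxDr mulmxDl addrACA. Qed.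

Lemma tensor_bdry_mulmxr g (p : 'M[F]_k) :
  p *m e = e *m p -> tensor_bdry (g *m p) = tensor_bdry g *m p.
Proof. by move=> pe; rewrite /tensor_bdry mulmxDl !mulmxA -(mulmxA _ p) pe mulmxA. Qed.

Lemma tensor_cycle_mulmxr h : tensor_bdry h = 0 -> h *m e = d *m (P *m h).
Proof.
move=> /eqP; rewrite addr_eq0 => /eqP dh.
by rewrite mulmxA -[d *m P]opprK -Pd mulNmx -mulmxA dh mulmxN opprK !mulmxA PP1 mul1mx.
Qed.

Lemma tensor_bdry_homotopy h (s : 'M[F]_k) :
  tensor_bdry h = 0 -> tensor_bdry (P *m h *m s) = h *m (e *m s + s *m e).
Proof.
move=> /tensor_cycle_mulmxr he.
by rewrite /tensor_bdry mulmxDr !mulmxA he PP1 mul1mx !mulmxA.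
Qed.

Variables (G1 : 'M[F]_m) (G2 : 'M[F]_k).
Hypotheses (G1G1 : G1 *m G1 = G1) (G2G2 : G2 *m G2 = G2).
Hypotheses (exact_d : exact_outside G1 d) (exact_e : exact_outside G2^T e^T).

Lemma tensor_cycle_mulmx_exact h q (p : 'M[F]_(k, q)) :
  tensor_bdry h = 0 -> G1 *m h *m G2 = 0 -> e *m p = 0 -> exists L, h *m p = d *m L.
Proof.
move=> cyc hG ep; apply: col_span_of_coker => z zd.
(* Clean [z] onto the support of [G1] and [p] onto that of [G2]. *)
have [w] := cocycle_cleaning G1G1 exact_d zd; set z' := z - w *m d => z'G.
have [W] := cycle_cleaning G2G2 exact_e ep; set p' := p - e *m W => p'G.
have z'd : z' *m d = 0 by rewrite mulmxBl -mulmxA dd0 mulmx0 zd subrr.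
have dhp : d *m h *m p = 0.
  by move/eqP: cyc; rewrite addr_eq0 => /eqP ->; rewrite mulNmx -!mulmxA ep !mulmx0 oppr0.
have zE : z = z' + w *m d by rewrite subrK.
have pE : p = p' + e *m W by rewrite subrK.
clearbody z' p'.
have z'E : z' = z' *m G1 by apply/eqP; rewrite -subr_eq0 -z'G mulmxBr mulmx1.
have p'E : p' = G2 *m p' by apply/eqP; rewrite -subr_eq0 -p'G mulmxBl mul1mx.
have z'hp' : z' *m (h *m p') = 0.
  have := congr1 (fun X => z' *m X *m p') hG.
  by rewrite mulmx0 mul0mx !mulmxA -z'E -(mulmxA _ G2) -p'E -mulmxA.
have z'heW : z' *m (h *m (e *m W)) = 0.
  by rewrite (mulmxA h) (tensor_cycle_mulmxr cyc) !mulmxA z'd !mul0mx.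
have wdhp : w *m d *m (h *m p) = 0.
  by rewrite !mulmxA -(mulmxA w) -mulmxA dhp mulmx0.
by rewrite zE mulmxDl wdhp addr0 pE !mulmxDr z'hp' z'heW addr0.
Qed.

Theorem tensor_cycle_bdry h :
  tensor_bdry h = 0 -> G1 *m h *m G2 = 0 -> exists g, h = tensor_bdry g.
Proof.
move=> cyc hG.
have [s ese] : exists s, e *m s *m e = e by exists (pinvmx e); apply: mulmxKpV.
pose pi := 1%:M - e *m s - s *m e.
have epi : e *m pi = 0.
  by rewrite /pi !mulmxBr mulmx1 !mulmxA ese ee0 mul0mx subr0 subrr.
have pie : pi *m e = 0.
  by rewrite /pi !mulmxBl mul1mx ese -mulmxA ee0 mulmx0 subr0 subrr.
have pi_split : pi + (e *m s + s *m e) = 1%:M by rewrite /pi -(addrA 1%:M) -opprD subrK.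
have [L hpiL] := tensor_cycle_mulmx_exact cyc hG epi.
have cyc_pi : tensor_bdry (h *m pi) = 0.
  by rewrite tensor_bdry_mulmxr ?cyc ?mul0mx // pie epi.
have bdry_Lpi : tensor_bdry (L *m pi) = h *m pi *m pi.
  by rewrite /tensor_bdry -!mulmxA pie !mulmx0 addr0 mulmxA -hpiL mulmxA.
(* [P h s] accounts for [h - h pi]; [L pi + P (h pi) s] for [h pi (pi + e s + s e)]. *)
exists (P *m h *m s + L *m pi + P *m (h *m pi) *m s).
rewrite !tensor_bdryD !tensor_bdry_homotopy // bdry_Lpi -addrA -mulmxDr pi_split.
by rewrite mulmx1 -mulmxDr addrC pi_split mulmx1.
Qed.

End TensorComplex.

Lemma Fp_two_neq0 D : prime D -> odd D -> (2%:R : 'F_D) != 0.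
Proof.
move=> pD oD; rewrite -(dvdn_pcharf (pchar_Fp pD)) (dvdn_prime2 pD) //.
by apply: contraL oD => /eqP ->.
Qed.

Lemma Pmx_tr (R : pzRingType) n : (Pmx R n)^T = Pmx R n.
Proof. by rewrite /Pmx tr_block_mx !trmx0 linearN /= trmx1. Qed.

Lemma Pmx_sqr (R : pzRingType) n : Pmx R n *m Pmx R n = 1%:M.
Proof.
rewrite /Pmx mulmx_block !mulmx0 !mul0mx !addr0 !add0r mulmx1 mulmxN mulmx1 opprK.
by rewrite -scalar_mx_block.
Qed.

Lemma bdry_tensor (R : fieldType) n (d1 d2 X : 'M[R]_(n + n)) :
  bdry d1 d2 X = tensor_bdry d1 (Pmx R n) d2^T X.
Proof. by rewrite /bdry /tens_app trmx1 mulmx1. Qed.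

Lemma bdryT_tensor (R : fieldType) n (d1 d2 X : 'M[R]_(n + n)) :
  bdryT d1 d2 X = tensor_bdry d1^T (Pmx R n) d2 X.
Proof. by rewrite /bdryT /tens_app !trmxK mulmx1 Pmx_tr. Qed.

Lemma compatible_antidiag (F : fieldType) n (d : 'M[F]_(n + n)) :
  (2%:R : F) != 0 -> compatible_boundary d -> d = block_mx 0 (dpm d) (dmp d) 0.
Proof.
move=> two [_ dP].
have half_eq0 (X : 'M[F]_n) : X + X = 0 -> X = 0.
  move=> XX; have : (2%:R : F) *: X == 0 by rewrite scaler_nat mulr2n XX.
  by rewrite scaler_eq0 (negbTE two) => /eqP.
have [ul0 dr0] : ulsubmx d = 0 /\ drsubmx d = 0.
  move: dP; rewrite -[d]submxK /Pmx !mulmx_block !mulmx0 !mul0mx !mulmx1 !mul1mx.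
  rewrite !addr0 !add0r !mulmxN !mulNmx !mulmx1 !mul1mx add_block_mx -block_mx0.
  case/eq_block_mx => /half_eq0 ul0 _ _; rewrite -opprD => /eqP; rewrite oppr_eq0.
  by move=> /eqP /half_eq0 dr0; rewrite block_mxKul block_mxKdr.
by rewrite -{1}[d]submxK ul0 dr0.
Qed.

Section ReducedProjection.
Variables (F : fieldType) (n m : nat).

Definition head_proj : 'M[F]_n := diag_mx (\row_(i < n) ((i < m)%N)%:R).
Definition red_proj : 'M[F]_(n + n) := block_mx head_proj 0 0 head_proj.

Lemma head_proj_idem : head_proj *m head_proj = head_proj.
Proof.
apply/matrixP => i j; rewrite /head_proj mul_diag_mx !mxE.
by case: (_ < m)%N; rewrite ?mul1r ?mul0r ?mul0rn.
Qed.

Lemma red_proj_idem : red_proj *m red_proj = red_proj.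
Proof. by rewrite /red_proj mulmx_block !mulmx0 !mul0mx !addr0 !add0r head_proj_idem. Qed.

Lemma red_proj_tr : red_proj^T = red_proj.
Proof. by rewrite /red_proj tr_block_mx !trmx0 tr_diag_mx. Qed.

Lemma card_ord_geq : #|[set i : 'I_n | (m <= i)%N]| = (n - m)%N.
Proof.
rewrite -sum1_card (eq_bigl (fun i : 'I_n => true && (m <= i)%N)) => [|i]; last by rewrite inE.
by rewrite -(big_geq_mkord m n predT (fun=> 1%N)) /= sum_nat_const_nat muln1.
Qed.

Lemma wt_head_proj_ker (v : 'cV[F]_n) : head_proj *m v = 0 -> (wt v <= n - m)%N.
Proof.
move=> hv; rewrite /wt -card_ord_geq; apply/subset_leq_card/subsetP => i.
rewrite !inE leqNgt; apply: contra => lt_im.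
by have /matrixP/(_ i 0) := hv; rewrite /head_proj mul_diag_mx !mxE lt_im mul1r => ->.
Qed.

Lemma head_proj_sandwich (X : 'M[F]_n) :
  (forall i j : 'I_n, (i < m)%N -> (j < m)%N -> X i j = 0) -> head_proj *m X *m head_proj = 0.
Proof.
move=> X0; apply/matrixP => i j; rewrite /head_proj mul_mx_diag mul_diag_mx !mxE.
by case: (boolP (i < m)%N) => im; case: (boolP (j < m)%N) => jm;
  rewrite ?mul0r ?mulr0 // mul1r mulr1 X0.
Qed.

Lemma red_proj_sandwich (h : 'M[F]_(n + n)) :
  in_Cplus h -> reduced_zero m h -> red_proj *m h *m red_proj = 0.
Proof.
move=> [ur0 dl0] red; rewrite -[h]submxK ur0 dl0 /red_proj !mulmx_block.
rewrite !mulmx0 !mul0mx !addr0 !add0r !mul0mx -block_mx0.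
by congr block_mx; apply: head_proj_sandwich => i j im jm; case: (red i j im jm).
Qed.

End ReducedProjection.

Section CodeDistance.
Variables (F : fieldType) (n : nat).

Lemma css_dist_low_weight (A B : 'M[F]_n) dd : css_dist_ge A B dd ->
  (forall v, B *m v = 0 -> (wt v < dd)%N -> in_im A v) /\
  (forall v, A^T *m v = 0 -> (wt v < dd)%N -> in_im B^T v).
Proof.
move=> dist; split=> v kv low; apply: NNPP => not_im.
- by have := dist v (or_introl (conj kv not_im)); rewrite leqNgt low.
- by have := dist v (or_intror (conj kv not_im)); rewrite leqNgt low.
Qed.

Lemma exact_outside_antidiag m (A B : 'M[F]_n) :
  (forall v, B *m v = 0 -> (wt v <= n - m)%N -> in_im A v) ->
  (forall v, A *m v = 0 -> (wt v <= n - m)%N -> in_im B v) ->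
  exact_outside (red_proj F n m) (block_mx 0 A B 0).
Proof.
move=> lowB lowA y; rewrite -[y]vsubmxK /red_proj !mul_block_col !mul0mx add0r addr0.
rewrite add0r addr0 -!col_mx0 => /eq_col_mx[Ay2 By1] /eq_col_mx[Gy1 Gy2].
have [a ->] := lowB _ By1 (wt_head_proj_ker Gy1).
have [b ->] := lowA _ Ay2 (wt_head_proj_ker Gy2).
by exists (col_mx b a); rewrite mul_block_col !mul0mx add0r addr0.
Qed.

Lemma exact_outside_of_css m (d : 'M[F]_(n + n)) :
  (2%:R : F) != 0 -> compatible_boundary d ->
  CSS_P_dist_ge d (2 * (n - m)).+1 -> CSS_mP_dist_ge d (2 * (n - m)).+1 ->
  exact_outside (red_proj F n m) d /\ exact_outside (red_proj F n m) d^T.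
Proof.
move=> two comp /css_dist_low_weight[lowB lowAT] /css_dist_low_weight[lowA lowBT].
have wt_lt v : (wt v <= n - m)%N -> (wt v < (2 * (n - m)).+1)%N.
  by move=> wv; rewrite ltnS (leq_trans wv) // mul2n -addnn leq_addr.
rewrite (compatible_antidiag two comp) tr_block_mx !trmx0.
split; apply: exact_outside_antidiag => v kv /wt_lt; [exact: lowB | exact: lowA |
  exact: lowAT | exact: lowBT].
Qed.

End CodeDistance.

Theorem lemma4 (D : nat) (HD : prime D) (Hodd : odd D) (n n' : nat) (Hn' : (n' <= n)%N)
  (d1 d2 : 'M['F_D]_(n + n))
  (Hd1 : compatible_boundary d1) (Hd2 : compatible_boundary d2)
  (H1P : CSS_P_dist_ge d1 (2 * (n - n')).+1) (H1mP : CSS_mP_dist_ge d1 (2 * (n - n')).+1)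
  (H2P : CSS_P_dist_ge d2 (2 * (n - n')).+1) (H2mP : CSS_mP_dist_ge d2 (2 * (n - n')).+1) :
  (forall h : 'M['F_D]_(n + n, n + n),
      in_Cplus h -> bdry d1 d2 h = 0 -> reduced_zero n' h ->
      exists g : 'M['F_D]_(n + n, n + n), h = bdry d1 d2 g) /\
  (forall h : 'M['F_D]_(n + n, n + n),
      in_Cplus h -> bdryT d1 d2 h = 0 -> reduced_zero n' h ->
      exists g : 'M['F_D]_(n + n, n + n), h = bdryT d1 d2 g).
Proof.
have two := Fp_two_neq0 HD Hodd.
have [ex1 ex1T] := exact_outside_of_css two Hd1 H1P H1mP.
have [ex2 ex2T] := exact_outside_of_css two Hd2 H2P H2mP.
have GG := red_proj_idem 'F_D n n'; have GT := red_proj_tr 'F_D n n'.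
have PP := Pmx_sqr 'F_D n.
case: Hd1 => d1d1 d1P; case: Hd2 => d2d2 _.
split=> h hC cyc red; have hG := red_proj_sandwich hC red.
- have d2Td2T : d2^T *m d2^T = 0 by rewrite -trmx_mul d2d2 trmx0.
  rewrite bdry_tensor in cyc *; rewrite -GT -[d2]trmxK in ex2.
  have [g ->] := tensor_cycle_bdry d1d1 d2Td2T PP d1P GG GG ex1 ex2 cyc hG.
  by exists g; rewrite bdry_tensor.
- have d1Td1T : d1^T *m d1^T = 0 by rewrite -trmx_mul d1d1 trmx0.
  have d1TP : d1^T *m Pmx 'F_D n + Pmx 'F_D n *m d1^T = 0.
    by rewrite -Pmx_tr -!trmx_mul -linearD /= addrC d1P trmx0.
  rewrite bdryT_tensor in cyc *; rewrite -GT in ex2T.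
  have [g ->] := tensor_cycle_bdry d1Td1T d2d2 PP d1TP GG GG ex1T ex2T cyc hG.
  by exists g; rewrite bdryT_tensor.
Qed.
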